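(* Let $g_1,g_2$ be monic divisors of $x^m-1$ over $\mathbb{F}_q$ and $v\in\mathcal{R}$ with $\gcd(v^2-1,x^m-1)=1$, and let $\mathcal{D}_3$ be the QC code of length $2m$ generated by $(g_1,vg_1)$ and $(vg_2,g_2)$. Then $\mathcal{D}_3$ is symplectic dual-containing iff $g_1\mid g_1^{\perp}(v-\overline{v})$, $g_2\mid g_1^{\perp}(1-\overline{v}v)$ and $g_2\mid g_2^{\perp}(\overline{v}-v)$.
   Context: $\mathcal{R}=\mathbb{F}_q[x]/(x^m-1)$, elements identified with representatives of degree $<m$; $[k]=(k_0,\dots,k_{m-1})$; $\overline{k}(x)=k(x^{-1})\bmod(x^m-1)$; $f^*(x)=x^{\deg f}f(1/x)$; for $k\in\mathcal{R}$, $f=\frac{x^m-1}{\gcd(k,x^m-1)}$, $k^{\perp}=f(0)^{-1}f^*$. ''$g\mid a$'' for $g\mid x^m-1$ means $g$ divides the representative of $a$. The QC code generated by $(u_{i1},u_{i2})$, $i=1,2$, is $\{([r_1u_{11}+r_2u_{21}],[r_1u_{12}+r_2u_{22}]):r_i\in\mathcal{R}\}\subseteq\mathbb{F}_q^{2m}$. Symplectic inner product $\sum_{i=1}^m(u_iv_{m+i}-u_{m+i}v_i)$; dual-containing means $\mathcal{D}_3^{\perp_S}\subseteq\mathcal{D}_3$. *)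

From HB Require Import structures.
From mathcomp Require Import all_boot all_order all_algebra all_field.
Set Implicit Arguments. Unset Strict Implicit. Unset Printing Implicit Defensive.
Import GRing.Theory.
Local Open Scope ring_scope.

(* R = F[x]/(x^m - 1); elements are represented by polynomials, and an
   element is identified with its representative of degree < m, i.e. p %% (x^m-1). *)
Section QC.
Variables (F : fieldType) (m : nat).

Definition xm1 : {poly F} := 'X^m - 1.

Definition rrep (p : {poly F}) : {poly F} := p %% xm1.

Definition coefvec (k : {poly F}) : 'rV[F]_m := \row_(i < m) (rrep k)`_i.

(* conjugation: kbar(x) = k(x^{-1}) mod (x^m - 1) *)
Definition rconj (k : {poly F}) : {poly F} :=
  \poly_(i < m) (rrep k)`_((m - i) %% m).

Definition recip (f : {poly F}) : {poly F} :=
  \poly_(i < size f) f`_(size f - 1 - i).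

Definition rperp (k : {poly F}) : {poly F} :=
  let f := xm1 %/ gcdp (rrep k) xm1 in (f`_0)^-1 *: recip f.

Definition rdvd (g a : {poly F}) : bool := g %| rrep a.

Definition symp (u w : 'rV[F]_m * 'rV[F]_m) : F :=
  \sum_(i < m) (u.1 0 i * w.2 0 i - u.2 0 i * w.1 0 i).

Definition qc_code (u11 u12 u21 u22 : {poly F}) (c : 'rV[F]_m * 'rV[F]_m) : Prop :=
  exists r1 r2 : {poly F},
    c = (coefvec (r1 * u11 + r2 * u21), coefvec (r1 * u12 + r2 * u22)).

Definition symp_dual (C : 'rV[F]_m * 'rV[F]_m -> Prop) (w : 'rV[F]_m * 'rV[F]_m) : Prop :=
  forall c, C c -> symp c w = 0.

Definition symp_dual_containing (C : 'rV[F]_m * 'rV[F]_m -> Prop) : Prop :=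
  forall w, symp_dual C w -> C w.

End QC.

From HB Require Import structures.
From mathcomp Require Import all_boot all_order all_algebra.
From mathcomp Require Import ring zify.
Set Implicit Arguments.
Unset Strict Implicit.
Unset Printing Implicit Defensive.
Import GRing.Theory.
Local Open Scope ring_scope.

(* Work in R = F[x]/(x^m - 1), where x is a unit and the conjugation
   k(x) |-> k(x^-1) is an involutive ring automorphism.  The dot product of
   coefficient vectors is the constant term of [a * conj d], a nondegenerate
   pairing, so (c, d) is symplectically orthogonal to the code iff
   g1 (conj d - v conj c) = 0 and g2 (conj c - v conj d) = 0.  The annihilator
   of g_i is generated by the cofactor h_i = (x^m - 1)/g_i, and as 1 - v^2 is a
   unit, (c, d) lies in the span of (A, v A) and (v B, B) iff A | c - v d and
   B | d - v c.  Applied to the code, and after conjugation to its dual, this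
   turns dual-containment into four divisibilities conj g_i | h_j * (...); the
   one with (i, j) = (1, 2) follows from the one with (2, 1) because
   g_i h_i = 0.  Finally k^perp is a unit multiple of conj ((x^m - 1)/k),
   which gives the stated form of the three remaining conditions. *)

Section RingDivisibility.
Variable R : comPzRingType.

Definition dvdR (a x : R) : Prop := exists t, x = a * t.

Lemma dvdR_mulr a x y : dvdR a x -> dvdR a (x * y).
Proof. by case=> t ->; exists (t * y); rewrite mulrA. Qed.

Lemma dvdRD a x y : dvdR a x -> dvdR a y -> dvdR a (x + y).
Proof. by case=> t -> [s ->]; exists (t + s); rewrite mulrDr. Qed.

Lemma dvdRN a x : dvdR a (- x) <-> dvdR a x.
Proof.
suff dvdN y : dvdR a y -> dvdR a (- y) by split=> /dvdN //; rewrite opprK.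
by case=> t ->; exists (- t); rewrite mulrN.
Qed.

Lemma dvdR_unitl a w w' x : w' * w = 1 -> dvdR a (w * x) <-> dvdR a x.
Proof.
move=> ww'; split=> [/(@dvdR_mulr _ _ w')|/(@dvdR_mulr _ _ w)]; last by rewrite mulrC.
by rewrite mulrC mulrA ww' mul1r.
Qed.

Lemma dvdR_lin2 a x y :
  (forall r s, dvdR a (r * x + s * y)) <-> dvdR a x /\ dvdR a y.
Proof.
split=> [dvd_rs|[dx dy] r s]; last by apply: dvdRD; rewrite mulrC; apply: dvdR_mulr.
by have := dvd_rs 1 0; have := dvd_rs 0 1; rewrite !mul1r !mul0r addr0 add0r.
Qed.

Lemma span2_dvdR A B V u c d : u * (1 - V * V) = 1 ->
  (exists r1 r2, c = r1 * A + r2 * (V * B) /\ d = r1 * (V * A) + r2 * B) <->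
  dvdR A (c - V * d) /\ dvdR B (d - V * c).
Proof.
move=> uE; split=> [[r1 [r2 [-> ->]]]|[[t1 ct1] [t2 dt2]]].
  by split; [exists (r1 * (1 - V * V)) | exists (r2 * (1 - V * V))]; ring.
exists (u * t1), (u * t2); split.
  have -> : c = u * ((c - V * d) + V * (d - V * c)) by rewrite -[LHS]mul1r -uE; ring.
  by rewrite ct1 dt2; ring.
have -> : d = u * (V * (c - V * d) + (d - V * c)) by rewrite -[LHS]mul1r -uE; ring.
by rewrite ct1 dt2; ring.
Qed.

End RingDivisibility.

Section CyclicQuotient.
Variables (F : fieldType) (m : nat).
Hypothesis m_gt0 : (0 < m)%N.

Local Notation M := (xm1 F m).
Local Notation Q := {poly %/ M}.
Local Notation iq := (in_qpoly M).

Lemma size_xm1 : size M = m.+1.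
Proof. by rewrite /xm1 -polyC1 size_XnsubC. Qed.

Lemma xm1_monic : M \is monic.
Proof. by rewrite /xm1 -polyC1 monicXnsubC. Qed.

Lemma xm1_neq0 : M != 0.
Proof. by rewrite -size_poly_gt0 size_xm1. Qed.

Lemma mk_monic_xm1 : mk_monic M = M.
Proof. by rewrite /mk_monic size_xm1 ltnS m_gt0 xm1_monic. Qed.

Lemma rrep_small (p : {poly F}) : (size p <= m)%N -> rrep m p = p.
Proof. by move=> small_p; rewrite /rrep modp_small // size_xm1 ltnS. Qed.

Lemma val_in_qpoly (p : {poly F}) : val (iq p) = rrep m p.
Proof. by rewrite /rrep /= mk_monic_xm1 (Pdiv.IdomainMonic.modpE xm1_monic). Qed.

Lemma size_qpoly (x : Q) : (size (val x) <= m)%N.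
Proof.
have size_mk : ((size (mk_monic M)).-1 <= m)%N by rewrite mk_monic_xm1 size_xm1.
exact: leq_trans (size_npoly x) size_mk.
Qed.

Lemma in_qpoly_val (x : Q) : iq (val x) = x.
Proof. by apply: val_inj; rewrite val_in_qpoly rrep_small ?size_qpoly. Qed.

Lemma in_qpoly_eq0 (p : {poly F}) : (iq p == 0) = (M %| p).
Proof. by rewrite -(inj_eq val_inj) val_in_qpoly; apply/eqP/modp_eq0P. Qed.

Lemma in_qpolyB (p q : {poly F}) : iq (p - q) = iq p - iq q.
Proof. exact: raddfB. Qed.

Lemma in_qpoly_xm1 : iq M = 0.
Proof. by apply/eqP; rewrite in_qpoly_eq0 dvdpp. Qed.

Lemma in_qpoly_rrep (p : {poly F}) : iq (rrep m p) = iq p.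
Proof. by rewrite -val_in_qpoly in_qpoly_val. Qed.

Lemma lrmorph_poly_expand {A : lalgType F} (f : {lrmorphism {poly F} -> A})
    {n} {p : {poly F}} :
  (size p <= n)%N -> f p = \sum_(i < n) p`_i *: f 'X ^+ i.
Proof.
move=> le_pn; rewrite -{1}(take_poly_id le_pn) /take_poly poly_def linear_sum.
by apply: eq_bigr => i _; rewrite linearZ rmorphXn.
Qed.

Definition qX : Q := iq 'X.
Definition qXinv : Q := qX ^+ (m - 1).

Lemma qX_exp_m : qX ^+ m = 1.
Proof.
apply/eqP; rewrite -subr_eq0 -rmorphXn -(rmorph1 iq) -rmorphB.
by rewrite in_qpoly_eq0 dvdpp.
Qed.

Lemma qXn_mod n : qX ^+ n = qX ^+ (n %% m).
Proof. by rewrite {1}(divn_eq n m) exprD mulnC exprM qX_exp_m expr1n mul1r. Qed.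

Lemma qX_mulXinv : qX * qXinv = 1.
Proof. by rewrite -exprS subn1 prednK // qX_exp_m. Qed.

Lemma qXn_mulXinv n i : (i <= n)%N -> qX ^+ n * qXinv ^+ i = qX ^+ (n - i).
Proof.
by move=> le_in; rewrite -{1}(subnK le_in) exprD -mulrA -exprMn qX_mulXinv expr1n mulr1.
Qed.

Lemma qXinvE i : (i <= m)%N -> qXinv ^+ i = qX ^+ (m - i).
Proof. by move=> le_im; rewrite -qXn_mulXinv // qX_exp_m mul1r. Qed.

Lemma val_qXn n : (n < m)%N -> val (qX ^+ n) = 'X^n.
Proof. by move=> lt_nm; rewrite -rmorphXn val_in_qpoly rrep_small // size_polyXn. Qed.

Lemma qpoly_expand (x : Q) : x = \sum_(i < m) (val x)`_i *: qX ^+ i.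
Proof. by rewrite -{1}(in_qpoly_val x) (lrmorph_poly_expand iq (size_qpoly x)). Qed.

Definition qconj (x : Q) : Q := horner_alg qXinv (val x).

Lemma horner_alg_qXinv_xm1 : horner_alg qXinv M = 0.
Proof.
rewrite /xm1 rmorphB rmorphXn /= horner_algX rmorph1 -exprM mulnC exprM.
by rewrite qX_exp_m expr1n subrr.
Qed.

Lemma qconj_in_qpoly (p : {poly F}) : qconj (iq p) = horner_alg qXinv p.
Proof.
rewrite /qconj val_in_qpoly /rrep [in RHS](divp_eq p M) rmorphD rmorphM /=.
by rewrite horner_alg_qXinv_xm1 mulr0 add0r.
Qed.

Fact qconj_is_linear : linear qconj.
Proof. by move=> a x y; rewrite /qconj linearP /= mulr_algl. Qed.

Fact qconj_is_monoid_morphism : monoid_morphism qconj.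
Proof.
split=> [|x y]; first by rewrite -[in LHS](rmorph1 iq) qconj_in_qpoly rmorph1.
by rewrite -{1}(in_qpoly_val x) -{1}(in_qpoly_val y) -rmorphM qconj_in_qpoly rmorphM.
Qed.

HB.instance Definition _ := GRing.isLinear.Build F Q Q *:%R qconj qconj_is_linear.
HB.instance Definition _ :=
  GRing.isMonoidMorphism.Build Q Q qconj qconj_is_monoid_morphism.

Lemma qconjX : qconj qX = qXinv.
Proof. by rewrite qconj_in_qpoly horner_algX. Qed.

Lemma qconjXn n : qconj (qX ^+ n) = qXinv ^+ n.
Proof. by rewrite rmorphXn /= qconjX. Qed.

Lemma qconjXinv : qconj qXinv = qX.
Proof.
have inv : qXinv * qconj qXinv = 1 by rewrite -{1}qconjX -rmorphM qX_mulXinv rmorph1.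
by rewrite -[LHS]mul1r -qX_mulXinv -mulrA inv mulr1.
Qed.

Lemma qconj_in_qpoly_sum n (p : {poly F}) :
  (size p <= n)%N -> qconj (iq p) = \sum_(i < n) p`_i *: qXinv ^+ i.
Proof.
move=> le_pn; rewrite (lrmorph_poly_expand iq le_pn) linear_sum.
by apply: eq_bigr => i _; rewrite linearZ /= qconjXn.
Qed.

Lemma qconj_expand (x : Q) : qconj x = \sum_(i < m) (val x)`_i *: qXinv ^+ i.
Proof. by rewrite -{1}(in_qpoly_val x) (qconj_in_qpoly_sum (size_qpoly x)). Qed.

Lemma qconjK : involutive qconj.
Proof.
move=> x; rewrite [qconj x]qconj_expand linear_sum [in RHS](qpoly_expand x).
by apply: eq_bigr => i _; rewrite linearZ /= rmorphXn /= qconjXinv.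
Qed.

Lemma eq_negmodn i j : (i < m)%N -> (j < m)%N ->
  (((m - i) %% m == j) = (i == (m - j) %% m))%N.
Proof.
have negE k : (k < m)%N -> ((m - k) %% m = if k == 0 then 0 else m - k)%N.
  move=> lt_km; case: eqP => [->|/eqP k0]; first by rewrite subn0 modnn.
  by rewrite modn_small //; lia.
move=> lt_im lt_jm; rewrite !negE //.
by case: (i =P 0%N) => [->|/eqP i0]; case: (j =P 0%N) => [->|/eqP j0] //=; apply/eqP/eqP; lia.
Qed.

Lemma rconjE (p : {poly F}) :
  rconj m p = \sum_(i < m) (rrep m p)`_i *: 'X^((m - i) %% m).
Proof.
apply/polyP => j; rewrite coef_poly coef_sumMXn.
case: ltnP => [lt_jm|le_mj].
  rewrite (big_pred1 (Ordinal (ltn_pmod (m - j) m_gt0))) // => i /=.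
  by rewrite eq_negmodn.
rewrite big_pred0 // => i; apply/negbTE; rewrite neq_ltn.
by rewrite (leq_trans (ltn_pmod _ m_gt0) le_mj).
Qed.

Lemma in_qpoly_rconj (p : {poly F}) : iq (rconj m p) = qconj (iq p).
Proof.
have size_rrep : (size (rrep m p) <= m)%N by rewrite -val_in_qpoly size_qpoly.
rewrite rconjE -[in RHS]in_qpoly_rrep (qconj_in_qpoly_sum size_rrep) linear_sum.
apply: eq_bigr => i _; rewrite linearZ /= rmorphXn qXinvE 1?ltnW //.
by rewrite [in RHS]qXn_mod.
Qed.

Lemma coef0_qXn n : (val (qX ^+ n))`_0 = (m %| n)%:R.
Proof. by rewrite qXn_mod val_qXn ?ltn_pmod // coefXn eq_sym. Qed.

Lemma dvdn_addMpred i k : (i < m)%N -> (k < m)%N -> (m %| i + (m - 1) * k)%N = (i == k).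
Proof.
rewrite /dvdn => lt_im lt_km; case: (ltngtP i k) => [lt_ik|lt_ki|<-].
- have -> : (i + (m - 1) * k = (k - 1) * m + (m - (k - i)))%N by nia.
  by rewrite modnMDl modn_small; last lia; apply/eqP; lia.
- have -> : (i + (m - 1) * k = k * m + (i - k))%N by nia.
  by rewrite modnMDl modn_small; last lia; apply/eqP; lia.
- have -> : (i + (m - 1) * i = i * m + 0)%N by nia.
  by rewrite modnMDl mod0n eqxx.
Qed.

Lemma coef_val_sum (I : Type) (r : seq I) (P : pred I) (f : I -> Q) j :
  (val (\sum_(i <- r | P i) f i))`_j = \sum_(i <- r | P i) (val (f i))`_j.
Proof. by rewrite raddf_sum coef_sum. Qed.

Lemma coef_valZ c (x : Q) j : (val (c *: x))`_j = c * (val x)`_j.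
Proof. by rewrite linearZ coefZ. Qed.

Lemma dot_coef_qconj (a d : Q) :
  \sum_(i < m) (val a)`_i * (val d)`_i = (val (a * qconj d))`_0.
Proof.
rewrite qconj_expand [in RHS](qpoly_expand a) mulr_suml coef_val_sum.
apply: eq_bigr => i _; rewrite mulr_sumr coef_val_sum (bigD1 i) // big1 => [|k ne_ki];
  rewrite -scalerAl -scalerAr scalerA coef_valZ /qXinv -exprM -exprD coef0_qXn;
  rewrite dvdn_addMpred //.
  by rewrite eqxx mulr1 /= addr0.
by move: ne_ki; rewrite -val_eqE eq_sym => /negbTE ->; rewrite mulr0.
Qed.

Lemma coef0_mul_eq0 (s : Q) : (forall r : Q, (val (r * s))`_0 = 0) -> s = 0.
Proof.
move=> s_perp; rewrite -[s]in_qpoly_val; suff -> : val s = 0 by rewrite raddf0.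
apply/polyP => j; rewrite coef0.
case: (ltnP j m) => [lt_jm|le_mj]; last first.
  by rewrite nth_default // (leq_trans (size_qpoly s) le_mj).
rewrite -[RHS](s_perp (qconj (qX ^+ j))) mulrC -dot_coef_qconj (bigD1 (Ordinal lt_jm)) //=.
rewrite val_qXn // coefXn eqxx mulr1 big1 ?addr0 // => i ne_ij.
by move: ne_ij; rewrite coefXn -val_eqE => /negbTE ->; rewrite mulr0.
Qed.

Definition qvec (x : Q) : 'rV[F]_m := \row_(i < m) (val x)`_i.

Lemma coefvec_qvec (p : {poly F}) : coefvec m p = qvec (iq p).
Proof. by rewrite /coefvec /qvec val_in_qpoly. Qed.

Lemma qvec_inj : injective qvec.
Proof.
move=> x y eq_xy; apply: val_inj; apply/polyP => j.
case: (ltnP j m) => [lt_jm|le_mj]; last first.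
  by rewrite !nth_default // (leq_trans (size_qpoly _) le_mj).
by have := congr1 (fun r : 'rV[F]_m => r 0 (Ordinal lt_jm)) eq_xy; rewrite !mxE.
Qed.

Lemma qvecK (r : 'rV[F]_m) : qvec (iq (rVpoly r)) = r.
Proof.
apply/matrixP => i j; rewrite !mxE val_in_qpoly rrep_small ?size_poly //.
by rewrite coef_rVpoly_ord (ord1 i).
Qed.

Lemma symp_qvec (p q c d : Q) :
  symp (qvec p, qvec q) (qvec c, qvec d) = (val (p * qconj d - q * qconj c))`_0.
Proof.
rewrite raddfB coefB -!dot_coef_qconj /symp /= -sumrB.
by apply: eq_bigr => i _; rewrite !mxE.
Qed.

Lemma dvdR_qconj (a x : Q) : dvdR (qconj a) (qconj x) <-> dvdR a x.
Proof.
split=> [[t ext]|[t ->]]; last by exists (qconj t); rewrite rmorphM.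
by exists (qconj t); rewrite -[x]qconjK ext rmorphM /= qconjK.
Qed.

Lemma rdvd_in_qpoly (g p : {poly F}) : g %| M -> rdvd m g p <-> dvdR (iq g) (iq p).
Proof.
move=> gM; rewrite /rdvd; split=> [g_p|[t ept]].
  by exists (iq (rrep m p %/ g)); rewrite -in_qpolyM (divpKC g_p) in_qpoly_rrep.
have /eqP : iq (p - g * val t) = 0 by rewrite in_qpolyB in_qpolyM in_qpoly_val ept subrr.
rewrite in_qpoly_eq0 => M_p; rewrite /rrep -dvdp_mod // -[p](subrK (g * val t)).
by rewrite dvdp_add ?dvdp_mulIl ?(dvdp_trans gM M_p).
Qed.

Lemma in_qpoly_ann (a b : {poly F}) : a * b = M ->
  forall t : Q, iq a * t = 0 <-> dvdR (iq b) t.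
Proof.
move=> abM t; split=> [at0|[s ->]]; last first.
  by rewrite mulrA -in_qpolyM abM in_qpoly_xm1 mul0r.
have a_neq0 : a != 0 by apply: contra_neq xm1_neq0 => a0; rewrite -abM a0 mul0r.
have : a * b %| a * val t by rewrite abM -in_qpoly_eq0 in_qpolyM in_qpoly_val at0.
rewrite dvdp_mul2l // => b_t.
by exists (iq (val t %/ b)); rewrite -in_qpolyM (divpKC b_t) in_qpoly_val.
Qed.

Lemma in_qpoly_recip (p : {poly F}) : iq (recip p) = qX ^+ (size p).-1 * qconj (iq p).
Proof.
rewrite (lrmorph_poly_expand iq (size_poly _ _)) (qconj_in_qpoly_sum (leqnn _)).
rewrite mulr_sumr (reindex_inj rev_ord_inj); apply: eq_bigr => i _.
rewrite coef_poly rev_ord_proof; case: i => [i lt_ip] /=.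
rewrite -scalerAr qXn_mulXinv; last by rewrite -ltnS prednK // (leq_ltn_trans _ lt_ip).
by congr (_`_ _ *: qX ^+ _); move: lt_ip; rewrite -?subn1; move: (size p) => n; lia.
Qed.

Lemma scale_qXn_unit (a : F) n : a != 0 -> (a^-1 *: qXinv ^+ n) * (a *: qX ^+ n) = 1.
Proof.
move=> a_neq0; rewrite -scalerAl -scalerAr scalerA mulVf // scale1r.
by rewrite -exprMn mulrC qX_mulXinv expr1n.
Qed.

Lemma cofactor_coef0_neq0 (h : {poly F}) : h %| M -> (M %/ h)`_0 != 0.
Proof.
move=> hM; apply/eqP => c0; move: (congr1 (fun q : {poly F} => q`_0) (divpKC hM)).
rewrite /= coef0M c0 mulr0 /xm1 coefB coefXn coef1 eq_sym gtn_eqF // sub0r => /eqP.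
by rewrite eq_sym oppr_eq0 oner_eq0.
Qed.

Lemma rperp_unit_cofactor (h : {poly F}) : h %| M ->
  exists w w' : Q, w' * w = 1 /\ iq (rperp m h) = w * qconj (iq (M %/ h)).
Proof.
move=> hM; set f := M %/ gcdp (rrep m h) M.
have f_eqp : f %= M %/ h.
  by apply: eqp_divr; apply: eqp_trans (gcdp_modl h M) _; exact: dvdp_gcd_idl.
have [[c1 c2] /andP[c1_neq0 c2_neq0] /= e] := eqpP _ _ f_eqp.
set c := c2 / c1.
have f_def : f = c *: (M %/ h) by rewrite /c mulrC -scalerA -e scalerA mulVf // scale1r.
have c_neq0 : c != 0 by rewrite mulf_neq0 ?invr_eq0.
have f0_neq0 : f`_0 != 0 by rewrite f_def coefZ mulf_neq0 ?cofactor_coef0_neq0.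
have Kf : qconj (iq f) = c *: qconj (iq (M %/ h)) by rewrite f_def in_qpolyZ linearZ.
exists (((f`_0)^-1 * c) *: qX ^+ (size f).-1).
exists (((f`_0)^-1 * c)^-1 *: qXinv ^+ (size f).-1); split.
  by rewrite scale_qXn_unit // mulf_neq0 ?invr_eq0.
by rewrite /rperp /= -/f in_qpolyZ in_qpoly_recip Kf -scalerAr scalerA -scalerAl.
Qed.

Lemma rdvd_rperp (g h Y : {poly F}) : g %| M -> h %| M ->
  rdvd m g (rperp m h * Y) <-> dvdR (qconj (iq g)) (iq (M %/ h) * qconj (iq Y)).
Proof.
move=> gM hM; rewrite rdvd_in_qpoly // in_qpolyM.
have [w [w' [ww' ->]]] := rperp_unit_cofactor hM.
by rewrite -mulrA (dvdR_unitl _ _ ww') -dvdR_qconj rmorphM /= qconjK.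
Qed.

Lemma coprime_xm1_unit (p : {poly F}) : coprimep (rrep m p) M -> exists u : Q, u * iq p = 1.
Proof.
move=> cop_p; exists (qpoly_inv (iq p)); apply: qpoly_mulVz.
by rewrite [X in coprimep X _]mk_monic_xm1 val_in_qpoly coprimep_sym.
Qed.

Section Code.
Variables (g1 g2 v : {poly F}) (u : Q).
Hypotheses (g1M : g1 %| M) (g2M : g2 %| M) (uE : u * (1 - iq v * iq v) = 1).

Local Notation C := (@qc_code F m g1 (v * g1) (v * g2) g2).
Local Notation G1 := (iq g1).
Local Notation G2 := (iq g2).
Local Notation H1 := (iq (M %/ g1)).
Local Notation H2 := (iq (M %/ g2)).
Local Notation V := (iq v).
Local Notation V' := (qconj (iq v)).
Local Notation W := (1 - V * V').

Lemma qc_code_qvec c d : C (qvec c, qvec d) <->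
  exists r1 r2 : Q, c = r1 * G1 + r2 * (V * G2) /\ d = r1 * (V * G1) + r2 * G2.
Proof.
split=> [[r1 [r2 []]]|[r1 [r2 [-> ->]]]].
  rewrite !coefvec_qvec => /qvec_inj -> /qvec_inj ->.
  by exists (iq r1), (iq r2); rewrite !in_qpolyD !in_qpolyM.
by exists (val r1), (val r2); rewrite !coefvec_qvec !in_qpolyD !in_qpolyM !in_qpoly_val.
Qed.

Lemma qc_code_dvdR c d : C (qvec c, qvec d) <-> dvdR G1 (c - V * d) /\ dvdR G2 (d - V * c).
Proof. by rewrite qc_code_qvec; apply: span2_dvdR uE. Qed.

Lemma symp_dual_qvec c d : symp_dual C (qvec c, qvec d) <->
  G1 * (qconj d - V * qconj c) = 0 /\ G2 * (qconj c - V * qconj d) = 0.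
Proof.
have symp_span r1 r2 :
    symp (qvec (r1 * G1 + r2 * (V * G2)), qvec (r1 * (V * G1) + r2 * G2)) (qvec c, qvec d) =
    (val (r1 * (G1 * (qconj d - V * qconj c)) - r2 * (G2 * (qconj c - V * qconj d))))`_0.
  by rewrite symp_qvec; congr ((val _)`_0); congr val; ring.
have span_in r1 r2 : C (qvec (r1 * G1 + r2 * (V * G2)), qvec (r1 * (V * G1) + r2 * G2)).
  by apply/qc_code_qvec; exists r1, r2.
split=> [dual|[e1 e2] _ [r1 [r2 ->]]].
  split; apply: coef0_mul_eq0 => r.
    by have := dual _ (span_in r 0); rewrite symp_span mul0r subr0.
  by have := dual _ (span_in 0 (- r)); rewrite symp_span mul0r sub0r mulNr opprK.
rewrite !coefvec_qvec !in_qpolyD !in_qpolyM symp_span e1 e2 !mulr0 subrr.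
by rewrite raddf0 coef0.
Qed.

Lemma symp_dual_span c d : symp_dual C (qvec c, qvec d) <->
  exists r1 r2, qconj d = r1 * H1 + r2 * (V * H2) /\ qconj c = r1 * (V * H1) + r2 * H2.
Proof.
rewrite symp_dual_qvec (in_qpoly_ann (divpKC g1M)) (in_qpoly_ann (divpKC g2M)).
exact: iff_sym (span2_dvdR _ _ _ _ uE).
Qed.

Lemma symp_dual_containingE : symp_dual_containing C <-> forall r1 r2 : Q,
  dvdR (qconj G1) (r1 * (H1 * (V - V')) + r2 * (H2 * W)) /\
  dvdR (qconj G2) (r1 * (H1 * W) + r2 * (H2 * (V - V'))).
Proof.
have code_span c d r1 r2 : qconj d = r1 * H1 + r2 * (V * H2) ->
    qconj c = r1 * (V * H1) + r2 * H2 ->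
  C (qvec c, qvec d) <->
  dvdR (qconj G1) (r1 * (H1 * (V - V')) + r2 * (H2 * W)) /\
  dvdR (qconj G2) (r1 * (H1 * W) + r2 * (H2 * (V - V'))).
  move=> ed ec; rewrite qc_code_dvdR -(dvdR_qconj G1) -(dvdR_qconj G2).
  rewrite !rmorphB !rmorphM /= ec ed.
  have -> : r1 * (V * H1) + r2 * H2 - V' * (r1 * H1 + r2 * (V * H2)) =
            r1 * (H1 * (V - V')) + r2 * (H2 * W) by ring.
  by have -> : r1 * H1 + r2 * (V * H2) - V' * (r1 * (V * H1) + r2 * H2) =
               r1 * (H1 * W) + r2 * (H2 * (V - V')) by ring.
split=> [dual_sub r1 r2|all_r [w1 w2]].
  pose c := qconj (r1 * (V * H1) + r2 * H2); pose d := qconj (r1 * H1 + r2 * (V * H2)).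
  have [ed ec] : qconj d = r1 * H1 + r2 * (V * H2) /\ qconj c = r1 * (V * H1) + r2 * H2.
    by rewrite !qconjK.
  rewrite -(code_span c d r1 r2 ed ec); apply: dual_sub.
  by apply/symp_dual_span; exists r1, r2.
rewrite -(qvecK w1) -(qvecK w2) => /symp_dual_span [r1 [r2 [ed ec]]].
by apply/(code_span _ _ r1 r2 ed ec).
Qed.

Lemma symp_dual_containing_iff :
  symp_dual_containing C <->
  [/\ dvdR (qconj G1) (H1 * (V - V')), dvdR (qconj G1) (H2 * W),
      dvdR (qconj G2) (H1 * W) & dvdR (qconj G2) (H2 * (V - V'))].
Proof.
rewrite symp_dual_containingE; split=> [all_r|[d1 d2 d3 d4] r1 r2].
  have [d1 d2] := (dvdR_lin2 _ _ _).1 (fun r1 r2 => (all_r r1 r2).1).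
  by have [d3 d4] := (dvdR_lin2 _ _ _).1 (fun r1 r2 => (all_r r1 r2).2).
by split; apply: (dvdR_lin2 _ _ _).2.
Qed.

(* Conjugating the hypothesis and multiplying by [H2] gives
   [H1 * (conj H2 * W) = 0]; the annihilator of [H1] is generated by [G1]. *)
Lemma dvdR_cofactor_swap : dvdR (qconj G2) (H1 * W) -> dvdR (qconj G1) (H2 * W).
Proof.
have KW : qconj W = W by rewrite rmorphB rmorph1 rmorphM /= qconjK mulrC.
rewrite -[H1 * W]qconjK -[H2 * W]qconjK !dvdR_qconj !rmorphM /= KW => -[t Et].
apply/(in_qpoly_ann (divpK g1M)); apply: (can_inj qconjK).
rewrite rmorph0 !rmorphM /= qconjK KW mulrCA Et mulrA -in_qpolyM (divpK g2M).
by rewrite in_qpoly_xm1 mul0r.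
Qed.

Lemma rperp_conditionsE :
  [/\ rdvd m g1 (rperp m g1 * (v - rconj m v)),
      rdvd m g2 (rperp m g1 * (1 - rconj m v * v))
    & rdvd m g2 (rperp m g2 * (rconj m v - v))] <->
  [/\ dvdR (qconj G1) (H1 * (V - V')), dvdR (qconj G2) (H1 * W)
    & dvdR (qconj G2) (H2 * (V - V'))].
Proof.
have cond1 : rdvd m g1 (rperp m g1 * (v - rconj m v)) <-> dvdR (qconj G1) (H1 * (V - V')).
  by rewrite rdvd_rperp // in_qpolyB in_qpoly_rconj rmorphB /= qconjK -opprB mulrN dvdRN.
have cond2 : rdvd m g2 (rperp m g1 * (1 - rconj m v * v)) <-> dvdR (qconj G2) (H1 * W).
  rewrite rdvd_rperp // in_qpolyB in_qpoly1 in_qpolyM in_qpoly_rconj.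
  by rewrite rmorphB rmorphM /= rmorph1 qconjK.
have cond3 : rdvd m g2 (rperp m g2 * (rconj m v - v)) <-> dvdR (qconj G2) (H2 * (V - V')).
  by rewrite rdvd_rperp // in_qpolyB in_qpoly_rconj rmorphB /= qconjK.
by split=> -[/cond1 d1 /cond2 d2 /cond3 d3]; split.
Qed.

End Code.
End CyclicQuotient.

Theorem mainTheorem13 (F : finFieldType) (m : nat) (g1 g2 v : {poly F}) :
  (0 < m)%N ->
  g1 \is monic -> g1 %| xm1 F m ->
  g2 \is monic -> g2 %| xm1 F m ->
  (size v <= m)%N ->
  coprimep (rrep m (v * v - 1)) (xm1 F m) ->
  symp_dual_containing (@qc_code _ m g1 (v * g1) (v * g2) g2) <->
  [/\ rdvd m g1 (rperp m g1 * (v - rconj m v)),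
      rdvd m g2 (rperp m g1 * (1 - rconj m v * v))
    & rdvd m g2 (rperp m g2 * (rconj m v - v))].
Proof.
move=> m_gt0 _ g1M _ g2M _ cop_v.
have [u uE] := coprime_xm1_unit m_gt0 cop_v.
rewrite in_qpolyB in_qpolyM in_qpoly1 -opprB mulrN -mulNr in uE.
rewrite (symp_dual_containing_iff m_gt0 g1M g2M uE) (rperp_conditionsE m_gt0 _ g1M g2M).
split=> [[d1 _ d3 d4]|[d1 d3 d4]]; first by split.
by split=> //; apply: dvdR_cofactor_swap.
Qed.
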